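(* Let $K$ be a finite subset of $\mathbb{R}^3$. Then $Extr(K^{cc})\subset K$.
   Context: A horizontal segment is one contained in a plane $\{z=c\}$; a vertical segment is one parallel to the $z$ axis. A $2+1$-complex is a closed subset of $\mathbb{R}^3$ that is the union of a finite list $L$ of elements, each of one of the following kinds: points; relatively open horizontal segments whose two endpoints belong to $L$; relatively open vertical segments whose two endpoints belong to $L$; relatively open triangles in a horizontal plane whose three boundary segments belong to $L$; relatively open rectangles in a vertical plane, two of whose sides are parallel to the $z$ axis, whose four boundary segments belong to $L$; open subsets of $\mathbb{R}^3$ whose boundary is a union of elements of the previous kinds, all belonging to $L$. For any $M\subset\mathbb{R}^3$, a point $p\in M$ is extremal if no relatively open horizontal or vertical segment contained in $M$ contains $p$; $Extr(M)$ is the set of extremal points of $M$. $K^{cc}=\bigcup\{L: L\text{ a } 2+1\text{-complex with } Extr(L)\subset K\}$. *)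

From Stdlib Require Import Reals List.
Open Scope R_scope.

Record pt := mkP { px : R; py : R; pz : R }.

Definition dist2 (p q : pt) : R :=
  (px p - px q)^2 + (py p - py q)^2 + (pz p - pz q)^2.

Definition is_open (U : pt -> Prop) : Prop :=
  forall x, U x -> exists eps, eps > 0 /\ forall y, dist2 x y < eps^2 -> U y.

Definition closure (U : pt -> Prop) (x : pt) : Prop :=
  forall eps, eps > 0 -> exists y, U y /\ dist2 x y < eps^2.

Definition is_closed (C : pt -> Prop) : Prop := forall x, closure C x -> C x.

Definition boundary (U : pt -> Prop) (x : pt) : Prop :=
  closure U x /\ closure (fun y => ~ U y) x.

Definition bounded (U : pt -> Prop) : Prop :=
  exists M, forall x, U x -> dist2 x (mkP 0 0 0) <= M.

Definition horizontal (a b : pt) : Prop := pz a = pz b /\ a <> b.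
Definition vertical (a b : pt) : Prop := px a = px b /\ py a = py b /\ a <> b.

Definition openseg (a b : pt) (x : pt) : Prop :=
  exists t, 0 < t < 1 /\
    px x = (1 - t) * px a + t * px b /\
    py x = (1 - t) * py a + t * py b /\
    pz x = (1 - t) * pz a + t * pz b.

(* Elements of a 2+1-complex *)
Inductive elem : Type :=
| EPt   : pt -> elem
| EHseg : pt -> pt -> elem
| EVseg : pt -> pt -> elem
| ETri  : pt -> pt -> pt -> elem
| ERect : R -> R -> R -> R -> R -> R -> elem
    (* ERect ux uy vx vy z1 z2: open rectangle in the vertical plane through
       (ux,uy),(vx,vy), with z between z1 and z2 *)
| EOpen : (pt -> Prop) -> elem.

Definition elemset (e : elem) : pt -> Prop :=
  match e with
  | EPt a => fun x => x = a
  | EHseg a b => openseg a b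
  | EVseg a b => openseg a b
  | ETri a b c => fun x => exists al be ga, 0 < al /\ 0 < be /\ 0 < ga /\
        al + be + ga = 1 /\
        px x = al * px a + be * px b + ga * px c /\
        py x = al * py a + be * py b + ga * py c /\
        pz x = al * pz a + be * pz b + ga * pz c
  | ERect ux uy vx vy z1 z2 => fun x => exists t, 0 < t < 1 /\
        px x = (1 - t) * ux + t * vx /\
        py x = (1 - t) * uy + t * vy /\
        z1 < pz x < z2
  | EOpen U => U
  end.

Definition is_lowdim (e : elem) : Prop :=
  match e with EOpen _ => False | _ => True end.

Definition belongs (L : list elem) (S : pt -> Prop) : Prop :=
  exists e, In e L /\ forall x, elemset e x <-> S x.

Definition wf_elem (L : list elem) (e : elem) : Prop :=
  match e with
  | EPt _ => True
  | EHseg a b => horizontal a b /\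
      belongs L (fun x => x = a) /\ belongs L (fun x => x = b)
  | EVseg a b => vertical a b /\
      belongs L (fun x => x = a) /\ belongs L (fun x => x = b)
  | ETri a b c => pz a = pz b /\ pz b = pz c /\
      (px b - px a) * (py c - py a) - (py b - py a) * (px c - px a) <> 0 /\
      belongs L (openseg a b) /\ belongs L (openseg b c) /\
      belongs L (openseg c a)
  | ERect ux uy vx vy z1 z2 => (ux, uy) <> (vx, vy) /\ z1 < z2 /\
      belongs L (openseg (mkP ux uy z1) (mkP vx vy z1)) /\
      belongs L (openseg (mkP ux uy z2) (mkP vx vy z2)) /\
      belongs L (openseg (mkP ux uy z1) (mkP ux uy z2)) /\
      belongs L (openseg (mkP vx vy z1) (mkP vx vy z2))
  | EOpen U => is_open U /\ bounded U /\
      exists S : list elem,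
        (forall e', In e' S -> In e' L /\ is_lowdim e') /\
        (forall x, boundary U x <-> exists e', In e' S /\ elemset e' x)
  end.

Definition complex21 (C : pt -> Prop) : Prop :=
  is_closed C /\
  exists L : list elem,
    (forall e, In e L -> wf_elem L e) /\
    (forall x, C x <-> exists e, In e L /\ elemset e x).

Definition Extr (M : pt -> Prop) (p : pt) : Prop :=
  M p /\
  ~ (exists a b, (horizontal a b \/ vertical a b) /\
       (forall x, openseg a b x -> M x) /\ openseg a b p).

Definition Kcc (K : pt -> Prop) (x : pt) : Prop :=
  exists C, complex21 C /\ (forall p, Extr C p -> K p) /\ C x.

From Stdlib Require Import Reals List.

(* Every complex whose extremal points lie in K is contained in K^cc, and a
   point of M that is extremal in a superset of M is extremal in M.  So an
   extremal point of K^cc, lying in some such complex C, is extremal in C and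
   hence belongs to K. *)

Lemma Extr_subset (M N : pt -> Prop) (p : pt) :
  (forall x, M x -> N x) -> M p -> Extr N p -> Extr M p.
Proof.
  intros HMN HMp [_ HnotN]. split; [exact HMp |].
  intros [a [b [Hab [HsegM Hp]]]].
  apply HnotN. exists a, b. split; [exact Hab |]. split; [| exact Hp].
  intros x Hx. apply HMN, HsegM, Hx.
Qed.

Lemma complex21_subset_Kcc (K C : pt -> Prop) :
  complex21 C -> (forall p, Extr C p -> K p) -> forall x, C x -> Kcc K x.
Proof.
  intros HC HE x HCx. exists C. split; [exact HC |]. split; [exact HE | exact HCx].
Qed.

Lemma Extr_Kcc (K : pt -> Prop) (p : pt) : Extr (Kcc K) p -> K p.
Proof.
  intros HExtr. pose proof HExtr as [[C [HC [HE HCp]]] _].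
  apply HE. apply (Extr_subset C (Kcc K)); [| exact HCp | exact HExtr].
  exact (complex21_subset_Kcc K C HC HE).
Qed.

Theorem lemma2p7 (K : list pt) :
  forall p, Extr (Kcc (fun q => In q K)) p -> In p K.
Proof.
  intros p. apply Extr_Kcc.
Qed.
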